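(* For any $0<\theta<1$, the Assouad spectrum $\dim_A^\theta$ is not stable with respect to graph sums: there exist continuous functions $g,h$ defined on a common interval $I$ such that $$\dim_A^\theta(\operatorname{Graph}(g+h))>\max\{\dim_A^\theta(\operatorname{Graph}(g)),\dim_A^\theta(\operatorname{Graph}(h))\}.$$
   Context: A notion of dimension $D$ is called stable with respect to graph sums if $D(\operatorname{Graph}(g+h))\le\max\{D(\operatorname{Graph}(g)),D(\operatorname{Graph}(h))\}$ for all continuous functions $g,h$ defined on a common interval $I$, where $\operatorname{Graph}(g)=\{(t,g(t)):t\in I\}$. For a bounded $F\subset\mathbb{R}^2$ and $r>0$, $N(F,r)$ is the least number of sets of diameter at most $r$ needed to cover $F$; $D(\mathbf z,R)$ is the closed disc of radius $R$ about $\mathbf z$. For $E\subset\mathbb{R}^2$ and $\theta\in(0,1)$, the Assouad spectrum is $\dim_A^\theta(E)=\inf\{\gamma>0:\exists C>0 \text{ s.t. } N(D(\mathbf z,R)\cap E,r)\le C(R/r)^\gamma \text{ for all } 0<r=R^{1/\theta}<R<1,\ \mathbf z\in E\}$. *)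

From Stdlib Require Import Reals List.
From Coquelicot Require Import Coquelicot.
Open Scope R_scope.

Definition pt := (R * R)%type.

Definition dist2 (x y : pt) : R :=
  sqrt ((fst x - fst y) ^ 2 + (snd x - snd y) ^ 2).

Definition diam_le (S : pt -> Prop) (r : R) : Prop :=
  forall x y, S x -> S y -> dist2 x y <= r.

Definition covered_by (F : pt -> Prop) (r : R) (n : nat) : Prop :=
  exists Ss : list (pt -> Prop),
    length Ss = n /\ (forall S, In S Ss -> diam_le S r) /\
    (forall x, F x -> exists S, In S Ss /\ S x).

(* N(F,r): least number of sets of diameter <= r covering F (p_infty if none) *)
Definition Ncov (F : pt -> Prop) (r : R) : Rbar :=
  Glb_Rbar (fun t => exists n : nat, covered_by F r n /\ t = INR n).

Definition disc (z : pt) (R0 : R) : pt -> Prop := fun x => dist2 x z <= R0.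

Definition assouad_exps (theta : R) (E : pt -> Prop) : R -> Prop :=
  fun gamma => gamma > 0 /\
    exists C : R, C > 0 /\
      forall (R0 : R) (z : pt), 0 < R0 < 1 -> E z ->
        Rbar_le (Ncov (fun x => disc z R0 x /\ E x) (Rpower R0 (1 / theta)))
                (C * Rpower (R0 / Rpower R0 (1 / theta)) gamma).

Definition assouad_spectrum (theta : R) (E : pt -> Prop) : Rbar :=
  Glb_Rbar (assouad_exps theta E).

Definition graph (I : R -> Prop) (f : R -> R) : pt -> Prop :=
  fun p => I (fst p) /\ snd p = f (fst p).

Definition cont_on_rel (I : R -> Prop) (f : R -> R) : Prop :=
  forall x, I x -> forall eps, eps > 0 -> exists delta, delta > 0 /\
    forall y, I y -> Rabs (y - x) < delta -> Rabs (f y - f x) < eps.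

Definition is_interval (I : R -> Prop) : Prop :=
  (exists a b, a < b /\ I a /\ I b) /\
  (forall x y z, I x -> I z -> x <= y <= z -> I y).

Definition Rbar_maxb (x y : Rbar) : Rbar := if Rbar_le_dec x y then y else x.

(* The sum is the chirp phi(t) = exp (- b t) sin (exp t) on [0, +oo), with
   b = (1 + theta) / 2, split as g + h where g = phi + rho and h = - rho for the
   ramp rho(t) = exp t - exp (- b t), whose increments dominate those of phi; so
   g and h are monotone.

   A monotone graph has Assouad spectrum at most 1: along it the coordinate
   x + y or x - y dominates the distance, so a disc of radius R meets it in a set
   covered by O(R / r) strips of width r.

   For the chirp, look at a trough t = l, where the amplitude is a = exp (- b l),
   at scales R = 4 a and r = R^(1/theta).  The window [l, l + 2a] contains about
   a e^l / PI full oscillations of amplitude at least a / 2, and each of them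
   crosses about a / (2 r) levels 2 r apart; this gives about e^((1-b) l) a / r
   points of the graph in D((l, -a), R), pairwise more than r apart.  Comparing
   the growth rates in l of this count and of (R / r)^gamma forces
   gamma >= 1 + (1 - b) / (b / theta - b) > 1. *)

From Pilot Require Import Defs.
From Stdlib Require Import Reals Lra Lia List ZArith ClassicalEpsilon FunctionalExtensionality.
From Coquelicot Require Import Coquelicot.
(* Re-imported so that [disc] is ours, not Coquelicot's. *)
Import Defs.
Open Scope R_scope.

Lemma exp_le_exp x y : x <= y -> exp x <= exp y.
Proof.
  intros [Hlt | ->]; [now left; apply exp_increasing | now right].
Qed.

Lemma nat_floor (u : R) : 0 <= u -> exists n : nat, INR n <= u < INR n + 1.
Proof.
  intros Hu; destruct (base_Int_part u) as [Hle Hgt].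
  assert (Hz : (0 <= Int_part u)%Z).
  { assert (IZR (-1) < IZR (Int_part u)) as Hlt by (simpl; lra).
    apply lt_IZR in Hlt; lia. }
  exists (Z.to_nat (Int_part u)); rewrite INR_IZR_INZ, Z2Nat.id by exact Hz; lra.
Qed.

Lemma Rabs_INR_sub_ge_1 (i j : nat) : i <> j -> 1 <= Rabs (INR i - INR j).
Proof.
  intros Hne; destruct (Nat.lt_total i j) as [Hlt | [-> | Hlt]]; [| easy |];
    apply le_INR in Hlt; rewrite S_INR in Hlt; unfold Rabs; destruct Rcase_abs; lra.
Qed.

Lemma Rabs_sin_sub_le x y : Rabs (sin x - sin y) <= Rabs (x - y).
Proof.
  destruct (MVT_abs sin cos y x) as [c [Hc _]]; [intros c _; apply derivable_pt_lim_sin|].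
  rewrite Hc; pose proof (COS_bound c); pose proof (Rabs_pos (x - y)).
  assert (Rabs (cos c) <= 1) by (apply Rabs_le; lra); nra.
Qed.

Lemma continuity_of_ex_derive (f : R -> R) : (forall x, ex_derive f x) -> continuity f.
Proof. intros Hf x; apply continuity_pt_filterlim; exact (ex_derive_continuous f x (Hf x)). Qed.

Lemma Rpower_inv_lt R0 theta : 0 < theta < 1 -> 0 < R0 < 1 ->
  0 < Rpower R0 (1 / theta) < R0.
Proof.
  intros Ht HR; split; [apply exp_pos|].
  assert (Hln : ln R0 < 0) by (rewrite <- ln_1; apply ln_increasing; lra).
  assert (Hexp : 1 < 1 / theta) by (apply Rlt_div_r; lra).
  unfold Rpower; rewrite <- (exp_ln R0) at 2 by lra; apply exp_increasing; nra.
Qed.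

(** * Distances and covering numbers *)

Lemma dist2_ge_abs_fst x y : Rabs (fst x - fst y) <= dist2 x y.
Proof.
  pose proof (sqrt_plus_sqr (fst x - fst y) (snd x - snd y)) as H.
  pose proof (Rmax_l (Rabs (fst x - fst y)) (Rabs (snd x - snd y))).
  unfold dist2; lra.
Qed.

Lemma dist2_ge_abs_snd x y : Rabs (snd x - snd y) <= dist2 x y.
Proof.
  pose proof (sqrt_plus_sqr (fst x - fst y) (snd x - snd y)) as H.
  pose proof (Rmax_r (Rabs (fst x - fst y)) (Rabs (snd x - snd y))).
  unfold dist2; lra.
Qed.

Lemma dist2_le_abs_add x y :
  dist2 x y <= Rabs (fst x - fst y) + Rabs (snd x - snd y).
Proof.
  unfold dist2; set (u := fst x - fst y); set (v := snd x - snd y).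
  pose proof (Rabs_pos u); pose proof (Rabs_pos v).
  rewrite <- (sqrt_pow2 (Rabs u + Rabs v)) by lra.
  apply sqrt_le_1_alt; rewrite <- (pow2_abs u), <- (pow2_abs v); nra.
Qed.

Lemma Ncov_le F r n : covered_by F r n -> Rbar_le (Ncov F r) (INR n).
Proof. intros H; apply (proj1 (Glb_Rbar_correct _)); now exists n. Qed.

Lemma NoDup_list_prod {A B : Type} (l : list A) (l' : list B) :
  NoDup l -> NoDup l' -> NoDup (list_prod l l').
Proof.
  intros Hl Hl'; induction Hl as [|a l Hnotin Hl IH]; [constructor|]; simpl.
  apply NoDup_app; [now apply NoDup_map_NoDup_ForallPairs; [intros ? ? ? ? [=]|] | exact IH |].
  intros [a' b'] Hmap Hprod; apply in_map_iff in Hmap as [? [[= <- _] _]].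
  now apply in_prod_iff in Hprod as [? _].
Qed.

Lemma covered_by_separated_le {A : Type} (F : pt -> Prop) r n (P : A -> pt) (ks : list A) :
  covered_by F r n -> NoDup ks -> (forall k, In k ks -> F (P k)) ->
  (forall k k', In k ks -> In k' ks -> k <> k' -> r < dist2 (P k) (P k')) ->
  (length ks <= n)%nat.
Proof.
  intros [Ss [Hlen [Hdiam Hcov]]] Hnd HF Hfar.
  set (S0 := fun _ : pt => False).
  assert (Hidx : forall k, exists i, In k ks -> (i < n)%nat /\ nth i Ss S0 (P k)).
  { intros k; destruct (classic (In k ks)) as [Hk | Hk]; [|now exists 0%nat].
    destruct (Hcov _ (HF k Hk)) as [S [HS HSp]].
    destruct (In_nth _ _ S0 HS) as [i [Hi <-]]; exists i; intros _; split; congruence. }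
  apply choice in Hidx as [idx Hidx].
  assert (Hinj : NoDup (map idx ks)).
  { apply NoDup_map_NoDup_ForallPairs; [|exact Hnd].
    intros k k' Hk Hk' Heq; apply NNPP; intros Hne.
    destruct (Hidx k Hk) as [Hi HPk]; destruct (Hidx k' Hk') as [_ HPk'].
    rewrite Heq in HPk.
    assert (Hin : In (nth (idx k') Ss S0) Ss) by (apply nth_In; congruence).
    specialize (Hdiam _ Hin _ _ HPk HPk'); specialize (Hfar k k' Hk Hk' Hne); lra. }
  assert (Hincl : incl (map idx ks) (seq 0 n)).
  { intros i Hi; apply in_map_iff in Hi as [k [<- Hk]].
    apply in_seq; split; [lia|]; apply Hidx, Hk. }
  pose proof (NoDup_incl_length Hinj Hincl) as Hle.
  now rewrite length_map, length_seq in Hle.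
Qed.

Lemma Ncov_ge_separated {A : Type} (F : pt -> Prop) r (P : A -> pt) (ks : list A) :
  NoDup ks -> (forall k, In k ks -> F (P k)) ->
  (forall k k', In k ks -> In k' ks -> k <> k' -> r < dist2 (P k) (P k')) ->
  Rbar_le (INR (length ks)) (Ncov F r).
Proof.
  intros Hnd HF Hfar; apply (proj2 (Glb_Rbar_correct _)); intros x [n [Hcov ->]].
  apply le_INR, (covered_by_separated_le F r n P ks Hcov Hnd HF Hfar).
Qed.

Lemma covered_by_strips (F : pt -> Prop) (s : pt -> R) (c w r : R) :
  0 < r -> 0 <= w ->
  (forall p q, F p -> F q -> dist2 p q <= Rabs (s p - s q)) ->
  (forall p, F p -> Rabs (s p - c) <= w) ->
  exists n, covered_by F r n /\ INR n <= 2 * w / r + 1.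
Proof.
  intros Hr Hw Hdist Hrange.
  destruct (nat_floor (2 * w / r)) as [N HN]; [apply Rdiv_le_0_compat; lra|].
  set (strip := fun (i : nat) p => F p /\ c - w + INR i * r <= s p <= c - w + (INR i + 1) * r).
  exists (S N); split; [|rewrite S_INR; lra].
  exists (map strip (seq 0 (S N))); split; [now rewrite length_map, length_seq|split].
  - intros S HS p q Hp Hq; apply in_map_iff in HS as [i [<- _]].
    destruct Hp as [Fp Sp], Hq as [Fq Sq].
    eapply Rle_trans; [now apply Hdist|]; apply Rabs_le; lra.
  - intros p Fp; specialize (Hrange p Fp); apply Rabs_le_between in Hrange.
    destruct (nat_floor ((s p - (c - w)) / r)) as [i [Hi1 Hi2]]; [apply Rdiv_le_0_compat; lra|].
    apply Rle_div_r in Hi1; [|lra]; apply Rlt_div_l in Hi2; [|lra].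
    exists (strip i); split; [|split; [exact Fp | lra]].
    apply in_map, in_seq; split; [lia|].
    enough (Hi : INR i < INR (S N)) by (apply INR_lt in Hi; lia).
    rewrite S_INR; apply Rle_lt_trans with (2 * w / r); [|lra].
    apply Rle_div_r; lra.
Qed.

(** * Graphs of monotone functions *)

Lemma graph_monotone_dist2_le (I : R -> Prop) (F : R -> R) sg p q :
  (sg = 1 \/ sg = -1) -> (forall x y, I x -> I y -> x <= y -> sg * F x <= sg * F y) ->
  graph I F p -> graph I F q ->
  dist2 p q <= Rabs ((fst p + sg * snd p) - (fst q + sg * snd q)).
Proof.
  intros Hsg Hmono [Ip Fp] [Iq Fq]; eapply Rle_trans; [apply dist2_le_abs_add|].
  assert (Hord : (fst p - fst q) * (sg * (snd p - snd q)) >= 0).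
  { rewrite Fp, Fq; destruct (Rle_dec (fst p) (fst q)) as [Hpq | Hpq].
    - specialize (Hmono _ _ Ip Iq Hpq); nra.
    - specialize (Hmono _ _ Iq Ip (Rlt_le _ _ (Rnot_le_lt _ _ Hpq))); nra. }
  destruct Hsg as [-> | ->]; unfold Rabs;
    repeat destruct Rcase_abs; nra.
Qed.

Lemma assouad_spectrum_graph_monotone_le_1 theta (I : R -> Prop) (F : R -> R) sg :
  0 < theta < 1 -> (sg = 1 \/ sg = -1) ->
  (forall x y, I x -> I y -> x <= y -> sg * F x <= sg * F y) ->
  Rbar_le (assouad_spectrum theta (graph I F)) 1.
Proof.
  intros Ht Hsg Hmono; apply (proj1 (Glb_Rbar_correct _)); split; [lra|].
  exists 5; split; [lra|]; intros R0 z HR0 Hz.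
  pose proof (Rpower_inv_lt R0 theta Ht HR0) as Hr; set (r := Rpower R0 (1 / theta)) in *.
  rewrite Rpower_1 by (apply Rdiv_lt_0_compat; lra).
  set (s := fun p : pt => fst p + sg * snd p).
  destruct (covered_by_strips (fun p => disc z R0 p /\ graph I F p) s (s z) (2 * R0) r)
    as [n [Hcov Hn]]; [lra | lra | | |].
  - intros p q [_ Hp] [_ Hq]; now apply (graph_monotone_dist2_le I F).
  - intros p [Hd _]; unfold disc, s in *.
    pose proof (dist2_ge_abs_fst p z); pose proof (dist2_ge_abs_snd p z).
    destruct Hsg as [-> | ->]; unfold Rabs in *; repeat destruct Rcase_abs; lra.
  - eapply Rbar_le_trans; [apply (Ncov_le _ _ _ Hcov)|]; simpl.
    assert (1 <= R0 / r) by (apply Rle_div_r; lra).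
    assert (2 * (2 * R0) / r = 4 * (R0 / r)) by (field; lra); lra.
Qed.

(** * Graphs oscillating across a band *)

Lemma separated_intervals_gap (ak bk : nat -> R) (N : nat) r : 0 <= r ->
  (forall k, (k <= N)%nat -> ak k <= bk k) ->
  (forall k, (k < N)%nat -> bk k + r < ak (S k)) ->
  forall k k', (k < k' <= N)%nat -> bk k + r < ak k'.
Proof.
  intros Hr Hab Hgap k k' Hk; induction k' as [|k' IH]; [lia|].
  destruct (Nat.eq_dec k k') as [<- | Hne]; [apply Hgap; lia|].
  specialize (IH ltac:(lia)); specialize (Hab k' ltac:(lia)); specialize (Hgap k' ltac:(lia)); lra.
Qed.

Lemma IVT_grid (f : R -> R) (ak bk y : nat -> R) (N J : nat) : continuity f ->
  (forall k j, (k <= N)%nat -> (j <= J)%nat -> ak k <= bk k /\ f (ak k) <= y j <= f (bk k)) ->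
  exists T : nat -> nat -> R, forall k j, (k <= N)%nat -> (j <= J)%nat ->
    ak k <= T k j <= bk k /\ f (T k j) = y j.
Proof.
  intros Hf Hosc.
  assert (Hlevel : forall k j,
             {t | (k <= N)%nat -> (j <= J)%nat -> ak k <= t <= bk k /\ f t = y j}).
  { intros k j; destruct (le_dec k N) as [Hk | Hk]; [|now exists 0].
    destruct (le_dec j J) as [Hj | Hj]; [|now exists 0].
    destruct (Hosc k j Hk Hj) as [Hab Hy].
    destruct (IVT_gen f (ak k) (bk k) (y j) Hf) as [t [Ht Hft]];
      [rewrite Rmin_left, Rmax_right by lra; lra|].
    exists t; intros _ _; rewrite Rmin_left, Rmax_right in Ht by lra; now split. }
  exists (fun k j => proj1_sig (Hlevel k j)); intros k j Hk Hj.
  exact (proj2_sig (Hlevel k j) Hk Hj).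
Qed.

Lemma Ncov_ge_oscillation_grid (G : pt -> Prop) (f : R -> R) (ak bk : nat -> R) (N J : nat) H r :
  continuity f -> 0 < r -> r * INR J <= H ->
  (forall k, (k <= N)%nat -> ak k <= bk k /\ f (ak k) <= - H /\ H <= f (bk k)) ->
  (forall k, (k < N)%nat -> bk k + r < ak (S k)) ->
  (forall k t, (k <= N)%nat -> ak k <= t <= bk k -> Rabs (f t) <= H -> G (t, f t)) ->
  Rbar_le (INR (S N * S J)) (Ncov G r).
Proof.
  intros Hf Hr HJ Hosc Hgap HG.
  assert (Hrange : forall j, (j <= J)%nat -> - H <= - H + 2 * r * INR j <= H).
  { intros j Hj; apply le_INR in Hj; pose proof (pos_INR j); nra. }
  destruct (IVT_grid f ak bk (fun j => - H + 2 * r * INR j) N J Hf) as [T HTT].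
  { intros k j Hk Hj; destruct (Hosc k Hk) as [Hab [Ha Hb]]; specialize (Hrange j Hj).
    split; [exact Hab | lra]. }
  pose proof (separated_intervals_gap ak bk N r (Rlt_le _ _ Hr)
                (fun k Hk => proj1 (Hosc k Hk)) Hgap) as Hsep.
  set (P := fun kj : nat * nat => (T (fst kj) (snd kj), f (T (fst kj) (snd kj)))).
  set (grid := list_prod (seq 0 (S N)) (seq 0 (S J))).
  assert (Hgrid : forall k j, In (k, j) grid -> (k <= N)%nat /\ (j <= J)%nat).
  { intros k j Hkj; apply in_prod_iff in Hkj as [Hk Hj]; apply in_seq in Hk, Hj; lia. }
  replace (S N * S J)%nat with (length grid) by (unfold grid; now rewrite length_prod, !length_seq).
  apply (Ncov_ge_separated G r P); [apply NoDup_list_prod; apply seq_NoDup | |].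
  - intros [k j] Hkj; destruct (Hgrid k j Hkj) as [Hk Hj], (HTT k j Hk Hj) as [Ht Hft].
    unfold P; simpl.
    apply (HG k); [exact Hk | exact Ht |]; rewrite Hft; apply Rabs_le, Hrange, Hj.
  - intros [k j] [k' j'] Hkj Hkj' Hne; unfold P; simpl.
    destruct (Hgrid k j Hkj) as [Hk Hj], (HTT k j Hk Hj) as [Ht Hft].
    destruct (Hgrid k' j' Hkj') as [Hk' Hj'], (HTT k' j' Hk' Hj') as [Ht' Hft'].
    destruct (Nat.lt_total k k') as [Hlt | [<- | Hlt]].
    + specialize (Hsep k k' ltac:(lia)).
      eapply Rlt_le_trans; [|apply dist2_ge_abs_fst]; simpl; rewrite Rabs_left; lra.
    + eapply Rlt_le_trans; [|apply dist2_ge_abs_snd]; simpl; rewrite Hft, Hft'.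
      replace (- H + 2 * r * INR j - (- H + 2 * r * INR j')) with (2 * r * (INR j - INR j')) by ring.
      rewrite Rabs_mult, (Rabs_right (2 * r)) by lra.
      assert (Hjj : j <> j') by congruence; pose proof (Rabs_INR_sub_ge_1 j j' Hjj); nra.
    + specialize (Hsep k' k ltac:(lia)).
      eapply Rlt_le_trans; [|apply dist2_ge_abs_fst]; simpl; rewrite Rabs_right; lra.
Qed.

(** * The chirp *)

Definition chirp (b t : R) : R := exp (- b * t) * sin (exp t).

Lemma continuity_chirp b : continuity (chirp b).
Proof. apply continuity_of_ex_derive; intros x; unfold chirp; auto_derive; easy. Qed.

Lemma trough_abscissa_ge_1 (n : nat) : (1 <= n)%nat -> 1 <= 2 * PI * INR n - PI / 2.
Proof. intros Hn; apply le_INR in Hn; pose proof PI2_1; simpl in Hn; nra. Qed.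

Lemma chirp_trough b (n : nat) : (1 <= n)%nat ->
  chirp b (ln (2 * PI * INR n - PI / 2)) = - exp (- b * ln (2 * PI * INR n - PI / 2)).
Proof.
  intros Hn; apply le_INR in Hn; pose proof PI2_1.
  unfold chirp; rewrite exp_ln by (simpl in Hn; nra).
  replace (2 * PI * INR n - PI / 2) with (- (PI / 2) + 2 * INR n * PI) by ring.
  rewrite sin_period, sin_neg, sin_PI2; ring.
Qed.

Lemma chirp_crest b (n : nat) :
  chirp b (ln (2 * PI * INR n + PI / 2)) = exp (- b * ln (2 * PI * INR n + PI / 2)).
Proof.
  pose proof (pos_INR n); pose proof PI2_1.
  unfold chirp; rewrite exp_ln by nra.
  replace (2 * PI * INR n + PI / 2) with (PI / 2 + 2 * INR n * PI) by ring.
  rewrite sin_period, sin_PI2; ring.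
Qed.

Section ChirpWindow.

Variables (b r : R) (K0 : nat).
Hypotheses (b_bounds : 0 < b < 1) (K0_pos : (1 <= K0)%nat) (r_pos : 0 < r).

Let X := 2 * PI * INR K0 - PI / 2.
Let l := ln X.
Let a := exp (- b * l).

Let X_ge_1 : 1 <= X := trough_abscissa_ge_1 K0 K0_pos.

(* [r X <= 1/4] makes [r] smaller than the gap, about [PI / X], between a crest
   and the next trough. *)
Hypotheses (window_small : 4 * a < 1) (many_periods : PI <= a * X)
  (fine_scale : r * X <= / 4).

Let trough (k : nat) := ln (2 * PI * INR (K0 + k) - PI / 2).
Let crest (k : nat) := ln (2 * PI * INR (K0 + k) + PI / 2).

Lemma chirp_window_trough_shift k : 2 * PI * INR (K0 + k) - PI / 2 = X + 2 * PI * INR k.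
Proof. unfold X; rewrite plus_INR; ring. Qed.

Lemma chirp_window_l_le_trough k : l <= trough k.
Proof.
  pose proof X_ge_1; pose proof (pos_INR k); pose proof PI2_1.
  unfold trough, l; rewrite chirp_window_trough_shift; apply ln_le; nra.
Qed.

Lemma chirp_window_trough_le_crest k : trough k <= crest k.
Proof.
  pose proof X_ge_1; pose proof (pos_INR k); pose proof PI2_1.
  unfold trough, crest; apply ln_le; [rewrite chirp_window_trough_shift; nra | lra].
Qed.

Lemma chirp_window_crest_le k : 2 * PI * INR k + PI <= 2 * (a * X) -> crest k <= l + 2 * a.
Proof.
  intros Hk; pose proof X_ge_1; pose proof (pos_INR k); pose proof PI2_1.
  set (u := (2 * PI * INR k + PI) / X).
  assert (Hu : u <= 2 * a).
  { unfold u; apply Rle_div_l; lra. }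
  assert (Hcrest : 2 * PI * INR (K0 + k) + PI / 2 = X * (1 + u)).
  { replace (2 * PI * INR (K0 + k) + PI / 2) with (X + (2 * PI * INR k + PI))
      by (unfold X; rewrite plus_INR; lra).
    unfold u; field; lra. }
  assert (Hu0 : 0 <= u) by (apply Rdiv_le_0_compat; nra).
  assert (ln (1 + u) <= u)
    by (rewrite <- (ln_exp u) at 2; apply ln_le; [lra | apply exp_ineq1_le]).
  unfold crest; rewrite Hcrest, ln_mult by lra; unfold l; lra.
Qed.

Lemma chirp_window_gap k : 2 * PI * INR (S k) + PI <= 2 * (a * X) -> crest k + r < trough (S k).
Proof.
  intros Hk; pose proof X_ge_1; pose proof (pos_INR k); pose proof PI2_1.
  assert (Ha : 0 < a) by apply exp_pos.
  rewrite S_INR in Hk.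
  set (Q := 2 * PI * INR (K0 + k) + PI / 2).
  assert (HQ : 2 * PI * INR (K0 + S k) - PI / 2 = Q + PI)
    by (unfold Q; rewrite !plus_INR, S_INR; lra).
  assert (HQX : Q + PI <= 2 * X) by (rewrite <- HQ, chirp_window_trough_shift, S_INR; nra).
  assert (Hr1 : r < 1) by nra.
  assert (Hexp : exp r <= / (1 - r)).
  { rewrite <- (Rinv_inv (exp r)), <- exp_Ropp; apply Rinv_le_contravar; [lra|].
    pose proof (exp_ineq1_le (- r)); lra. }
  assert (HQpos : 0 < Q) by (unfold Q; rewrite plus_INR; pose proof (pos_INR K0); nra).
  assert (Q * / (1 - r) < Q + PI) by (apply Rlt_div_l; nra).
  apply exp_lt_inv; unfold crest, trough; fold Q; rewrite HQ, exp_plus, exp_ln by lra.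
  rewrite exp_ln by lra; nra.
Qed.

Lemma chirp_window_amplitude t : l <= t <= l + 2 * a -> a / 2 <= exp (- b * t).
Proof.
  intros Ht; assert (Ha : 0 < a) by apply exp_pos.
  assert (Hlow : a * exp (- (2 * b * a)) <= exp (- b * t)).
  { replace (a * exp (- (2 * b * a))) with (exp (- b * l + - (2 * b * a)))
      by (rewrite exp_plus; reflexivity).
    apply exp_le_exp; nra. }
  pose proof (exp_ineq1_le (- (2 * b * a))); nra.
Qed.

Lemma chirp_window_periods : exists N : nat,
  (forall k, (k <= N)%nat -> 2 * PI * INR k + PI <= 2 * (a * X)) /\ a * X / (2 * PI) <= INR N + 1.
Proof.
  pose proof PI2_1; assert (Hperiods : 1 <= a * X / PI) by (apply Rle_div_r; lra).
  destruct (nat_floor (a * X / PI - 1 / 2)) as [N HN]; [lra|].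
  exists N; split.
  - intros k Hk; apply le_INR in Hk.
    assert (INR k * PI <= a * X - PI / 2); [|nra].
    apply Rle_div_r; [lra|].
    replace ((a * X - PI / 2) / PI) with (a * X / PI - 1 / 2) by (field; lra); lra.
  - replace (a * X / (2 * PI)) with (a * X / PI - a * X / PI / 2) by (field; lra); lra.
Qed.

Lemma Ncov_chirp_window_ge :
  Rbar_le (a * X * a / (4 * PI * r))
    (Ncov (fun p => disc (l, chirp b l) (4 * a) p /\ graph (fun t => 0 <= t) (chirp b) p) r).
Proof.
  pose proof X_ge_1; pose proof PI2_1; assert (Ha : 0 < a) by apply exp_pos.
  assert (Hl : 0 <= l) by (rewrite <- ln_1; apply ln_le; lra).
  destruct chirp_window_periods as [N [Hfit HN]].
  destruct (nat_floor (a / 2 / r)) as [J HJ]; [apply Rlt_le, Rdiv_lt_0_compat; lra|].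
  assert (Hwindow : forall k t, (k <= N)%nat -> trough k <= t <= crest k -> l <= t <= l + 2 * a).
  { intros k t Hk Ht; pose proof (chirp_window_l_le_trough k).
    pose proof (chirp_window_crest_le k (Hfit k Hk)); lra. }
  apply Rbar_le_trans with (INR (S N * S J)).
  { change (a * X * a / (4 * PI * r) <= INR (S N * S J)); rewrite mult_INR, !S_INR.
    assert (a / (2 * r) <= INR J + 1).
    { replace (a / (2 * r)) with (a / 2 / r) by (field; lra); lra. }
    replace (a * X * a / (4 * PI * r)) with (a * X / (2 * PI) * (a / (2 * r))) by (field; lra).
    apply Rmult_le_compat; try lra; apply Rdiv_le_0_compat; nra. }
  apply (Ncov_ge_oscillation_grid _ (chirp b) trough crest N J (a / 2) r).
  - apply continuity_chirp.
  - exact r_pos.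
  - destruct HJ as [HJ _]; apply Rle_div_r in HJ; lra.
  - intros k Hk; split; [apply chirp_window_trough_le_crest|].
    pose proof (chirp_window_trough_le_crest k) as Hac.
    pose proof (chirp_window_amplitude (trough k)) as Htrough.
    pose proof (chirp_window_amplitude (crest k)) as Hcrest.
    pose proof (Hwindow k (trough k) Hk); pose proof (Hwindow k (crest k) Hk).
    unfold trough, crest in *; rewrite chirp_trough, chirp_crest by lia.
    split; [apply Ropp_le_contravar, Htrough | apply Hcrest]; lra.
  - intros k Hk; apply chirp_window_gap, Hfit, Hk.
  - intros k t Hk Ht Hamp; specialize (Hwindow k t Hk Ht); split; [|split; simpl; lra].
    assert (Hz : chirp b l = - a) by exact (chirp_trough b K0 K0_pos).
    unfold disc; eapply Rle_trans; [apply dist2_le_abs_add|]; simpl; rewrite Hz.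
    apply Rabs_le_between in Hamp; unfold Rabs; repeat destruct Rcase_abs; lra.
Qed.

End ChirpWindow.

Section ChirpScales.

Variables (theta b : R) (K0 : nat).
Hypotheses (theta_lt_b : 0 < theta < b) (b_lt_1 : b < 1) (K0_pos : (1 <= K0)%nat).

Let X := 2 * PI * INR K0 - PI / 2.
Let l := ln X.
Let a := exp (- b * l).
Let r := Rpower (4 * a) (1 / theta).
Let X_ge_1 : 1 <= X := trough_abscissa_ge_1 K0 K0_pos.

Hypotheses (l_large_radius : ln 4 < b * l) (l_large_periods : ln PI <= (1 - b) * l)
  (l_large_scale : ln 4 / theta + ln 4 <= (b / theta - 1) * l).

Lemma chirp_scales_ln_radius : ln (4 * a) = ln 4 - b * l.
Proof. rewrite ln_mult by (lra || apply exp_pos); unfold a; rewrite ln_exp; lra. Qed.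

Lemma chirp_scales_ln_r : ln r = (ln 4 - b * l) / theta.
Proof.
  unfold r, Rpower; rewrite ln_exp, chirp_scales_ln_radius; field; lra.
Qed.

Lemma chirp_scales_radius_lt_1 : 0 < 4 * a < 1.
Proof.
  assert (Ha : 0 < 4 * a) by (pose proof (exp_pos (- b * l)); unfold a; lra).
  split; [exact Ha|]; apply ln_lt_inv; [exact Ha | lra |].
  rewrite chirp_scales_ln_radius, ln_1; lra.
Qed.

Lemma chirp_scales_periods : PI <= a * X.
Proof.
  pose proof X_ge_1 as HX; pose proof PI2_1.
  assert (HaX : a * X = exp ((1 - b) * l)).
  { replace ((1 - b) * l) with (- b * l + l) by lra.
    rewrite exp_plus; change (exp l) with (exp (ln X)); rewrite exp_ln by lra; reflexivity. }
  rewrite HaX, <- (exp_ln PI) by lra; now apply exp_le_exp.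
Qed.

Lemma chirp_scales_fine : r * X <= / 4.
Proof.
  pose proof X_ge_1 as HX.
  assert (Hr : 0 < r) by apply exp_pos.
  replace (/ 4) with (exp (- ln 4)) by (rewrite exp_Ropp, exp_ln; lra).
  rewrite <- (exp_ln (r * X)), ln_mult, chirp_scales_ln_r by nra; apply exp_le_exp.
  assert (Hdiv : (ln 4 - b * l) / theta = ln 4 / theta - b / theta * l) by (field; lra).
  change (ln X) with l; lra.
Qed.

Lemma chirp_admissible_log_bound gam C : 0 < gam -> 0 < C ->
  (forall R0 z, 0 < R0 < 1 -> graph (fun t => 0 <= t) (chirp b) z ->
     Rbar_le (Ncov (fun x => disc z R0 x /\ graph (fun t => 0 <= t) (chirp b) x)
                   (Rpower R0 (1 / theta)))
             (C * Rpower (R0 / Rpower R0 (1 / theta)) gam)) ->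
  (1 - b + (b / theta - b) - gam * (b / theta - b)) * l <= ln C + ln (4 * PI) + ln 4 / theta.
Proof.
  intros Hg HC Hadm.
  pose proof X_ge_1 as HX; pose proof PI2_1.
  pose proof chirp_scales_radius_lt_1 as HR0.
  assert (Hr : 0 < r) by apply exp_pos; assert (Ha : 0 < a) by apply exp_pos.
  assert (Hz : graph (fun t => 0 <= t) (chirp b) (l, chirp b l)).
  { split; [|reflexivity]; simpl; rewrite <- ln_1; apply ln_le; lra. }
  assert (Hbound : a * X * a / (4 * PI * r) <= C * Rpower (4 * a / r) gam).
  { change (Rbar_le (a * X * a / (4 * PI * r)) (C * Rpower (4 * a / r) gam)).
    eapply Rbar_le_trans; [|exact (Hadm (4 * a) _ HR0 Hz)].
    apply (Ncov_chirp_window_ge b r K0); [lra | exact K0_pos | exact Hr | exact (proj2 HR0) |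
                                          exact chirp_scales_periods | exact chirp_scales_fine]. }
  apply ln_le in Hbound; [|apply Rdiv_lt_0_compat; nra].
  unfold Rpower in Hbound.
  rewrite ln_div, (ln_mult (a * X) a), ln_mult, (ln_mult (4 * PI) r), (ln_mult C), ln_exp, ln_div,
    chirp_scales_ln_radius, chirp_scales_ln_r in Hbound by (try apply exp_pos; nra).
  assert (Hla : ln a = - b * l) by apply ln_exp.
  rewrite Hla in Hbound; change (ln X) with l in Hbound.
  assert (Hv : 1 < 1 / theta) by (apply Rlt_div_r; lra).
  assert (Hsign : 0 <= gam * ln 4 * (1 / theta - 1))
    by (apply Rmult_le_pos; [apply Rmult_le_pos; [lra|] | lra];
        rewrite <- ln_1; left; apply ln_increasing; lra).
  replace ((ln 4 - b * l) / theta) with (ln 4 * (1 / theta) - b * (1 / theta) * l) in Hbound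
    by (field; lra).
  replace (b / theta) with (b * (1 / theta)) by (field; lra).
  replace (ln 4 / theta) with (ln 4 * (1 / theta)) by (field; lra).
  nra.
Qed.

End ChirpScales.

Lemma exists_trough_ge M : exists K0 : nat, (1 <= K0)%nat /\ M <= ln (2 * PI * INR K0 - PI / 2).
Proof.
  destruct (nat_floor (exp M)) as [n Hn]; [apply Rlt_le, exp_pos|].
  exists (S n); split; [lia|]; rewrite S_INR; pose proof PI2_1; pose proof (pos_INR n).
  rewrite <- (ln_exp M) at 1; apply ln_le; [apply exp_pos | nra].
Qed.

Lemma assouad_spectrum_chirp_ge theta b : 0 < theta < b -> b < 1 ->
  Rbar_le (1 + (1 - b) / (b / theta - b))
          (assouad_spectrum theta (graph (fun t => 0 <= t) (chirp b))).
Proof.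
  intros Ht Hb1; apply (proj2 (Glb_Rbar_correct _)); intros gam [Hg [C [HC Hadm]]].
  change (1 + (1 - b) / (b / theta - b) <= gam); apply Rnot_lt_le; intros Hlt.
  assert (Hbt : 1 < b / theta) by (apply Rlt_div_r; lra).
  assert (HD : 0 < b / theta - b) by nra.
  set (D := b / theta - b) in *.
  set (e0 := 1 - b + D - gam * D).
  assert (He0 : 0 < e0).
  { apply (Rmult_lt_compat_r D) in Hlt; [|exact HD].
    replace ((1 + (1 - b) / D) * D) with (D + (1 - b)) in Hlt by (field; lra).
    unfold e0; lra. }
  set (B := ln C + ln (4 * PI) + ln 4 / theta).
  set (M := Rmax (Rmax (ln 4 / b) (ln PI / (1 - b)))
                  (Rmax ((ln 4 / theta + ln 4) / (b / theta - 1)) (B / e0))).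
  destruct (exists_trough_ge (M + 1)) as [K0 [HK0 Hl]].
  set (l := ln (2 * PI * INR K0 - PI / 2)) in Hl.
  assert (Hbig : forall c x, 0 < c -> x / c <= M -> x < c * l).
  { intros c x Hc0 Hx; rewrite Rmult_comm; apply Rlt_div_l; lra. }
  assert (HM : ln 4 / b <= M /\ ln PI / (1 - b) <= M /\
                (ln 4 / theta + ln 4) / (b / theta - 1) <= M /\ B / e0 <= M)
    by (unfold M; repeat split; rewrite !Rmax_Rle; intuition (apply Rle_refl)).
  destruct HM as [HM1 [HM2 [HM3 HM4]]].
  pose proof (chirp_admissible_log_bound theta b K0 Ht Hb1 HK0
                (Hbig b _ ltac:(lra) HM1) (Rlt_le _ _ (Hbig (1 - b) _ ltac:(lra) HM2))
                (Rlt_le _ _ (Hbig (b / theta - 1) _ ltac:(lra) HM3)) gam C Hg HC Hadm) as Hlog.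
  pose proof (Hbig _ _ He0 HM4); fold D e0 B l in Hlog; lra.
Qed.

(** * Splitting the chirp into monotone summands *)

Definition chirp_ramp (b t : R) : R := exp t - exp (- b * t).

Lemma continuity_chirp_ramp b : continuity (chirp_ramp b).
Proof. apply continuity_of_ex_derive; intros x; unfold chirp_ramp; auto_derive; easy. Qed.

Lemma chirp_ramp_nondecreasing b x y : 0 < b -> x <= y -> chirp_ramp b x <= chirp_ramp b y.
Proof.
  intros Hb Hxy; unfold chirp_ramp.
  pose proof (exp_le_exp _ _ Hxy); assert (exp (- b * y) <= exp (- b * x)) by (apply exp_le_exp; nra).
  lra.
Qed.

(* The increments of the ramp dominate those of the chirp on [0, +oo):
   |d (exp (- b t) sin (exp t))| <= d (exp t) + |d (exp (- b t))|. *)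
Lemma chirp_add_ramp_nondecreasing b x y : 0 < b < 1 -> 0 <= x -> x <= y ->
  chirp b x + chirp_ramp b x <= chirp b y + chirp_ramp b y.
Proof.
  intros Hb Hx Hxy; unfold chirp, chirp_ramp.
  pose proof (exp_le_exp _ _ Hxy).
  assert (exp (- b * y) <= exp (- b * x)) by (apply exp_le_exp; nra).
  assert (exp (- b * y) <= 1) by (rewrite <- exp_0; apply exp_le_exp; nra).
  pose proof (exp_pos (- b * y)); pose proof (SIN_bound (exp x)).
  pose proof (Rabs_sin_sub_le (exp y) (exp x)) as Hs.
  rewrite (Rabs_right (exp y - exp x)) in Hs by lra; apply Rabs_le_between in Hs.
  assert (exp (- b * y) * (sin (exp y) - sin (exp x)) >= - (exp y - exp x)) by nra.
  nra.
Qed.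

Lemma cont_on_rel_of_continuity (I : R -> Prop) (f : R -> R) : continuity f -> cont_on_rel I f.
Proof.
  intros Hc x _ eps Heps; destruct (Hc x eps Heps) as [d [Hd Hd']].
  exists d; split; [lra|]; intros y _ Hy; destruct (Req_dec y x) as [-> | Hne].
  - rewrite Rminus_eq_0, Rabs_R0; lra.
  - apply (Hd' y); repeat split; auto.
Qed.

Lemma is_interval_nonneg : is_interval (fun t => 0 <= t).
Proof. split; [exists 0, 1; lra | intros x y z Hx _ Hxy; lra]. Qed.

Lemma Rbar_maxb_le x y c : Rbar_le x c -> Rbar_le y c -> Rbar_le (Rbar_maxb x y) c.
Proof. intros Hx Hy; unfold Rbar_maxb; now destruct Rbar_le_dec. Qed.

Theorem corollary4p8 :
  forall theta : R, 0 < theta < 1 ->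
    exists (I : R -> Prop) (g h : R -> R),
      is_interval I /\ cont_on_rel I g /\ cont_on_rel I h /\
      Rbar_lt (Rbar_maxb (assouad_spectrum theta (graph I g))
                        (assouad_spectrum theta (graph I h)))
              (assouad_spectrum theta (graph I (fun t => g t + h t))).
Proof.
  intros theta Ht; set (b := (1 + theta) / 2); assert (Hb : theta < b < 1) by (unfold b; lra).
  exists (fun t => 0 <= t), (fun t => chirp b t + chirp_ramp b t), (fun t => - chirp_ramp b t).
  replace (fun t => chirp b t + chirp_ramp b t + - chirp_ramp b t) with (chirp b)
    by (apply functional_extensionality; intros t; ring).
  split; [exact is_interval_nonneg|].
  split; [apply cont_on_rel_of_continuity, continuity_plus;
          [apply continuity_chirp | apply continuity_chirp_ramp]|].
  split; [apply cont_on_rel_of_continuity, continuity_opp, continuity_chirp_ramp|].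
  apply Rbar_le_lt_trans with 1.
  - apply Rbar_maxb_le.
    + apply (assouad_spectrum_graph_monotone_le_1 theta _ _ 1 Ht (or_introl eq_refl)).
      intros x y Hx _ Hxy; rewrite !Rmult_1_l; apply chirp_add_ramp_nondecreasing; lra.
    + apply (assouad_spectrum_graph_monotone_le_1 theta _ _ (-1) Ht (or_intror eq_refl)).
      intros x y _ _ Hxy; pose proof (chirp_ramp_nondecreasing b x y ltac:(lra) Hxy); lra.
  - eapply Rbar_lt_le_trans; [|apply assouad_spectrum_chirp_ge; lra]; simpl.
    assert (0 < (1 - b) / (b / theta - b)); [|lra].
    apply Rdiv_lt_0_compat; [lra|]; assert (1 < b / theta) by (apply Rlt_div_r; lra); nra.
Qed.
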